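(* For every integer $\nu\ge12$, $c_\nu\le\frac14+\frac{1}{3\sqrt\nu-10}$.
   Context: A weighted digraph $D=(V,A,w)$ is a digraph without loops or parallel arcs (opposite arcs allowed) with weights $w:A\to\mathbb{R}_{\ge0}$ (no lower bound on weights); $w(D)$ is the total arc weight. For a partition $(X,Y)$ of $V$, $w(X,Y)$ is the total weight of arcs from $X$ to $Y$, and $\mathrm{mac}(D)=\max_{(X,Y)}w(X,Y)$. For an integer $\nu\ge1$, $c_\nu$ is the supremum of reals $c\ge0$ such that every acyclic weighted digraph $D$ whose longest directed path has exactly $\nu$ vertices satisfies $\mathrm{mac}(D)\ge c\cdot w(D)$. *)

From HB Require Import structures.
From mathcomp Require Import all_boot all_order all_algebra.
From mathcomp Require Import boolp classical_sets reals.
Set Implicit Arguments. Unset Strict Implicit. Unset Printing Implicit Defensive.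
Import Order.TTheory GRing.Theory Num.Theory.
Local Open Scope ring_scope.

(* A weighted digraph: finite vertex type V, arc relation a (no loops; the
   relation form excludes parallel arcs but allows opposite arcs), and a weight
   function w, of which only the values on arcs matter. *)
Definition loopless (V : finType) (a : rel V) : Prop := forall x, ~~ a x x.

Definition nonneg_weights (R : realType) (V : finType) (a : rel V)
  (w : V -> V -> R) : Prop := forall u v, a u v -> 0 <= w u v.

Definition is_dpath (V : finType) (a : rel V) (s : seq V) : bool :=
  if s is x :: p then path a x p && uniq s else false.

Definition acyclic (V : finType) (a : rel V) : Prop :=
  forall s : seq V, s != [::] -> ~~ cycle a s.

Definition longest_path_vertices (V : finType) (a : rel V) (nu : nat) : Prop :=
  (exists s, is_dpath a s /\ size s = nu) /\
  (forall s, is_dpath a s -> (size s <= nu)%N).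

Definition total_weight (R : realType) (V : finType) (a : rel V)
  (w : V -> V -> R) : R := \sum_(u : V) \sum_(v : V | a u v) w u v.

Definition cut_weight (R : realType) (V : finType) (a : rel V)
  (w : V -> V -> R) (X : {set V}) : R :=
  \sum_(u in X) \sum_(v in ~: X | a u v) w u v.

Definition mac (R : realType) (V : finType) (a : rel V) (w : V -> V -> R) : R :=
  \big[Num.max/0]_(X : {set V}) cut_weight a w X.

Definition c_nu (R : realType) (nu : nat) : R :=
  sup [set c : R | 0 <= c /\
        forall (V : finType) (a : rel V) (w : V -> V -> R),
          loopless a -> nonneg_weights a w -> acyclic a ->
          longest_path_vertices a nu ->
          c * total_weight a w <= mac a w].

From HB Require Import structures.
From mathcomp Require Import all_boot all_order all_algebra.
From mathcomp Require Import classical_sets reals.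
From mathcomp Require Import ring lra zify.
Import Order.TTheory GRing.Theory Num.Theory.
Local Open Scope ring_scope.

(* The witness is the weighted "band" digraph on the vertices 0, ..., n-1
   (n = nu) with an arc u -> v whenever u < v < u + m, of weight m - (v - u).
   It is acyclic and its longest path is 0 -> 1 -> ... -> n-1 (n vertices).
   Its total weight is m (m - 1) (3n - m - 1) / 6, while every cut has weight
   at most n m^2 / 8: extending the indicator b of the source side X
   n-periodically, the cut weight is dominated by
   sum_u sum_(0 <= i < j < m) b(u+i) (1 - b(u+j)), and for each window of
   length m this pair count is S (m - S) / 2 plus a term linear in the
   positions that cancels after summing over all n periodic shifts, whereas
   S (m - S) <= m^2 / 4.  Hence c_nu <= 3 n m / (4 (m - 1) (3n - m - 1)),
   and choosing m = 2 floor(sqrt n) makes this at most the claimed bound,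
   which is a polynomial inequality in s = sqrt n and q = floor(sqrt n). *)

Definition band_arc (n m : nat) : rel 'I_n := fun u v => (u < v < u + m)%N.

Definition band_weight (R : realType) (n m : nat) : 'I_n -> 'I_n -> R :=
  fun u v => (m - (v - u))%:R.

Lemma band_loopless n m : loopless (band_arc n m).
Proof. by move=> x; rewrite /band_arc ltnn. Qed.

(* Arcs increase the label, so no directed cycle exists. *)
Lemma band_acyclic n m : acyclic (band_arc n m).
Proof.
move=> [//|x p] _; apply/negP => /= cyc.
have incr : path (fun u v : 'I_n => (u < v)%N) x (rcons p x).
  by apply: sub_path cyc => u v /andP[].
have /allP/(_ x) := order_path_min (fun _ _ _ => @ltn_trans _ _ _) incr.
by rewrite mem_rcons mem_head ltnn => /(_ isT).
Qed.

Lemma band_path_iota n m (x : 'I_n) s : (1 < m)%N ->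
  map val (x :: s) = iota x (size s).+1 -> path (band_arc n m) x s.
Proof.
move=> m1; elim: s x => [//|y s IH] x /= [xy ys].
by rewrite IH /= ?xy ?ys // andbT /band_arc xy; lia.
Qed.

Lemma band_longest n m : (0 < n)%N -> (1 < m)%N ->
  longest_path_vertices (band_arc n m) n.
Proof.
move=> n0 m1; split.
  exists (enum 'I_n); split; last exact: size_enum_ord.
  have := val_enum_ord n; have := size_enum_ord n.
  case: (enum 'I_n) (enum_uniq 'I_n) => [|x p] uniq_p sz; first by rewrite -sz in n0.
  have -> : iota 0 n = iota 0 (size p).+1 by rewrite -[in LHS]sz.
  move=> vals; rewrite /is_dpath uniq_p andbT; apply: band_path_iota => //.
  by move: vals => /= [x0 ->]; rewrite x0.
move=> [//|x p] /andP[_ uniq_p].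
rewrite -[X in (_ <= X)%N](size_enum_ord n) uniq_leq_size // => y _; exact: mem_enum.
Qed.

Section PeriodicSums.
Variable R : realFieldType.

Lemma periodic_shift_sum (f : nat -> R) n i : (forall v, f (v + n)%N = f v) ->
  \sum_(0 <= u < n) f (u + i)%N = \sum_(0 <= u < n) f u.
Proof.
move=> f_periodic; elim: i => [|i IH]; first by apply: eq_bigr => u _; rewrite addn0.
rewrite -IH; apply: (@addIr _ (f i)).
rewrite [in RHS](_ : f i = f (n + i)%N); last by rewrite addnC f_periodic.
rewrite -(big_nat_recr _ _ (fun u => f (u + i)%N)) //= big_nat_recl //= add0n addrC.
by congr (_ + _); apply: eq_bigr => u _; rewrite addSnnS.
Qed.

Lemma sum_over_pairs (h : nat -> R) m :
  \sum_(0 <= j < m) \sum_(0 <= i < j) h (j - i)%N =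
  \sum_(0 <= e < m) (m - e.+1)%:R * h e.+1.
Proof.
elim: m => [|m IH]; first by rewrite !big_geq.
rewrite big_nat_recr //= IH [in RHS]big_nat_recr //= subnn mul0r addr0.
have -> : \sum_(0 <= i < m) h (m - i)%N = \sum_(0 <= e < m) h e.+1.
  by rewrite big_nat_rev /=; apply: eq_big_nat => i /andP[_ im]; rewrite add0n subKn.
rewrite -big_split /=; apply: eq_big_nat => e /andP[_ em].
by rewrite subSn // mulrSr mulrDl mul1r.
Qed.

Lemma window_identity (b : nat -> bool) m :
  2 * \sum_(0 <= j < m) \sum_(0 <= i < j) ((b i)%:R * (1 - (b j)%:R) : R) =
  (\sum_(0 <= i < m) (b i)%:R) * (m%:R - \sum_(0 <= i < m) (b i)%:R) +
  \sum_(0 <= i < m) (b i)%:R * (m%:R - 1 - 2 * i%:R).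
Proof.
elim: m => [|m IH]; first by rewrite !big_geq // mulr0 mul0r addr0.
rewrite !big_nat_recr //= mulrDr IH -mulr_suml.
have -> : \sum_(0 <= i < m) (b i)%:R * (m.+1%:R - 1 - 2 * i%:R) =
   \sum_(0 <= i < m) (b i)%:R * (m%:R - 1 - 2 * i%:R) + \sum_(0 <= i < m) (b i)%:R :> R.
  by rewrite -big_split /=; apply: eq_bigr => i _; rewrite mulrS; ring.
by rewrite mulrS; case: (b m) => /=; ring.
Qed.

Lemma sum_centered m : \sum_(0 <= i < m) (m%:R - 1 - 2 * i%:R : R) = 0.
Proof.
elim: m => [|m IH]; first by rewrite big_geq.
rewrite big_nat_recr //=.
have -> : \sum_(0 <= i < m) (m.+1%:R - 1 - 2 * i%:R : R) =
   \sum_(0 <= i < m) (m%:R - 1 - 2 * i%:R) + \sum_(0 <= i < m) 1.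
  by rewrite -big_split /=; apply: eq_bigr => i _; rewrite mulrS; ring.
by rewrite IH add0r sumr_const_nat subn0 -mulr_natl mulr1 mulrS; ring.
Qed.

Section Periodic.
Variables (b : nat -> bool) (n : nat).
Hypothesis b_periodic : forall v, b (v + n)%N = b v.

Lemma periodic_pair_sum m :
  \sum_(0 <= u < n) \sum_(0 <= e < m)
     (m - e.+1)%:R * ((b u)%:R * (1 - (b (u + e.+1)%N)%:R)) =
  \sum_(0 <= u < n) \sum_(0 <= j < m) \sum_(0 <= i < j)
     ((b (u + i)%N)%:R * (1 - (b (u + j)%N)%:R) : R).
Proof.
under eq_bigr => u _ do
  rewrite -(sum_over_pairs (fun d => (b u)%:R * (1 - (b (u + d)%N)%:R))).
rewrite exchange_big [RHS]exchange_big /=; apply: eq_bigr => j _.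
rewrite exchange_big [RHS]exchange_big /=; apply: eq_big_nat => i /andP[_ ij].
rewrite -(periodic_shift_sum (fun u => (b u)%:R * (1 - (b (u + (j - i))%N)%:R)) n i).
  by apply: eq_bigr => u _; rewrite -addnA subnKC // ltnW.
by move=> v; rewrite /= b_periodic -addnA [(n + _)%N]addnC addnA b_periodic.
Qed.

Lemma cyclic_cut_bound m :
  \sum_(0 <= u < n) \sum_(0 <= e < m)
     (m - e.+1)%:R * ((b u)%:R * (1 - (b (u + e.+1)%N)%:R)) <=
  n%:R * m%:R ^+ 2 / 8 :> R.
Proof.
pose S u := \sum_(0 <= i < m) ((b (u + i)%N)%:R : R).
have centered : \sum_(0 <= u < n) \sum_(0 <= i < m)
    (b (u + i)%N)%:R * (m%:R - 1 - 2 * i%:R) = 0 :> R.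
  rewrite exchange_big /=.
  have b_periodic_R v : ((b (v + n)%N)%:R : R) = (b v)%:R by rewrite b_periodic.
  under eq_bigr => i _ do
    rewrite -mulr_suml (periodic_shift_sum (fun u => (b u)%:R) n i b_periodic_R).
  by rewrite -mulr_sumr sum_centered mulr0.
have amgm u : S u * (m%:R - S u) <= m%:R ^+ 2 / 4.
  by have := sqr_ge0 (m%:R / 2 - S u); lra.
suff : 2 * \sum_(0 <= u < n) \sum_(0 <= j < m) \sum_(0 <= i < j)
     ((b (u + i)%N)%:R * (1 - (b (u + j)%N)%:R) : R) <= n%:R * m%:R ^+ 2 / 4.
  by rewrite periodic_pair_sum; lra.
under eq_bigr => u _ do rewrite -/(S u).
rewrite mulr_sumr.
under eq_bigr => u _ do rewrite (window_identity (fun i => b (u + i)%N)).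
rewrite big_split /= centered addr0.
apply: le_trans (ler_sum _ (fun u _ => amgm u)) _.
by rewrite sumr_const_nat subn0 -mulr_natl; lra.
Qed.

End Periodic.
End PeriodicSums.

Section BandWeights.
Variable R : realType.

Lemma band_neighbour_sum (F : nat -> R) n k u :
  \sum_(0 <= v < n) (if (u < v < u + k.+1)%N then F v else 0) =
  \sum_(0 <= e < k) (if (u + e.+1 < n)%N then F (u + e.+1)%N else 0).
Proof.
elim: k => [|k IH].
  by rewrite [RHS]big_geq // big_nat_cond big1 // => v _; case: ifP => //; lia.
rewrite big_nat_recr //= -IH -[(u + k.+1 < n)%N]/(0 <= u + k.+1 < n)%N.
rewrite -(big_nat1_eq +%R F) big_mkcond -big_split /=.
apply: eq_bigr => v _; case: (v =P (u + k.+1)%N) => [->|ne].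
  by rewrite ifT ?ifF ?add0r //; lia.
by rewrite addr0; congr (if _ then _ else _); apply/idP/idP; lia.
Qed.

(* Every cut of the band digraph weighs at most n m^2 / 8: compare it with
   the cyclic cut of the n-periodic extension of its indicator. *)
Lemma band_cut_bound n m (X : {set 'I_n}) :
  cut_weight (band_arc n m) (band_weight R n m) X <= n%:R * m%:R ^+ 2 / 8.
Proof.
case: m => [|k].
  rewrite /cut_weight big1 => [|u _]; first by rewrite expr0n mulr0 mul0r.
  by rewrite big1 // => v /andP[_]; rewrite /band_arc addn0; lia.
pose b v := [exists u in X, val u == (v %% n)%N].
have b_periodic v : b (v + n)%N = b v by rewrite /b modnDr.
have b_in (u : 'I_n) : b u = (u \in X).
  rewrite /b; apply/existsP/idP => [[u' /andP[u'X /eqP]]|uX].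
    by rewrite modn_small // => /val_inj <-.
  by exists u; rewrite uX modn_small //= eqxx.
have as_nat_sum : cut_weight (band_arc n k.+1) (band_weight R n k.+1) X =
    \sum_(0 <= u < n) (b u)%:R * \sum_(0 <= v < n)
      (if (u < v < u + k.+1)%N then (k.+1 - (v - u))%:R * (1 - (b v)%:R) else 0).
  rewrite big_mkord /cut_weight big_mkcond /=; apply: eq_bigr => u _.
  rewrite b_in big_mkord; case: (u \in X); rewrite ?mul0r // mul1r big_mkcond /=.
  apply: eq_bigr => v _; rewrite b_in inE /band_arc /band_weight.
  by case: (v \in X); case: (u < v < u + k.+1)%N; rewrite /= ?subrr ?subr0 ?mulr0 ?mulr1.
rewrite as_nat_sum; apply: le_trans (@cyclic_cut_bound R b n b_periodic k.+1).
apply: ler_sum => u _; rewrite band_neighbour_sum.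
under [X in _ <= X]eq_bigr => e _ do rewrite mulrCA.
rewrite -mulr_sumr ler_wpM2l // big_nat_recr //= subnn mul0r addr0.
apply: ler_sum => e _; rewrite addKn; case: ifP => // _.
by apply: mulr_ge0; case: (b _); rewrite /= ?subrr ?subr0.
Qed.

Lemma count_fitting n c : (c <= n)%N ->
  \sum_(0 <= u < n) (if (u + c < n)%N then 1 else 0) = (n - c)%:R :> R.
Proof.
move=> cn; rewrite (@big_cat_nat _ _ _ (n - c)) ?leq_subr //=.
rewrite [X in _ + X]big_nat_cond [X in _ + X]big1 => [|u /andP[/andP[? ?] _]]; last first.
  by rewrite ifF //; apply/negbTE; lia.
rewrite addr0 (eq_big_nat _ _ (F2 := fun _ => 1)) => [|u /andP[_ ?]]; last by rewrite ifT //; lia.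
by rewrite sumr_const_nat subn0.
Qed.

Lemma sum_descending (x : R) k :
  \sum_(0 <= e < k) (x - e%:R - 1) = k%:R * x - k%:R * (k%:R + 1) / 2.
Proof.
elim: k => [|k IH]; first by rewrite big_geq // mul0r; ring.
by rewrite big_nat_recr //= IH mulrS; field.
Qed.

Lemma sum_weighted_descending (x : R) k :
  \sum_(0 <= e < k) (k%:R - e%:R) * (x - e%:R - 1) =
  x * k%:R * (k%:R + 1) / 2 - k%:R * (k%:R + 1) * (k%:R + 2) / 6.
Proof.
elim: k => [|k IH]; first by rewrite big_geq // mulr0 mul0r; ring.
rewrite big_nat_recr //=.
have -> : \sum_(0 <= e < k) (k.+1%:R - e%:R) * (x - e%:R - 1) =
  \sum_(0 <= e < k) (k%:R - e%:R) * (x - e%:R - 1) + \sum_(0 <= e < k) (x - e%:R - 1).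
  by rewrite -big_split /=; apply: eq_bigr => e _; rewrite mulrS; ring.
by rewrite IH sum_descending mulrS; field.
Qed.

(* Total weight: n - e - 1 arcs of length e + 1 with weight m - e - 1. *)
Lemma band_total_weight n m : (0 < m <= n)%N ->
  total_weight (band_arc n m) (band_weight R n m) =
  m%:R * (m%:R - 1) * (3 * n%:R - m%:R - 1) / 6.
Proof.
case: m => [//|k] /= kn.
have as_nat_sum : total_weight (band_arc n k.+1) (band_weight R n k.+1) =
    \sum_(0 <= u < n) \sum_(0 <= v < n)
      (if (u < v < u + k.+1)%N then (k.+1 - (v - u))%:R else 0).
  by rewrite big_mkord; apply: eq_bigr => u _; rewrite big_mkord big_mkcond.
have by_offset : total_weight (band_arc n k.+1) (band_weight R n k.+1) =
    \sum_(0 <= e < k) (k - e)%:R * (n - e.+1)%:R.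
  rewrite as_nat_sum; under eq_bigr => u _ do rewrite band_neighbour_sum.
  rewrite exchange_big /=; apply: eq_big_nat => e /andP[_ ek].
  rewrite -(count_fitting n e.+1 (leq_trans ek (ltnW kn))) mulr_sumr.
  by apply: eq_bigr => u _; rewrite addKn subSS; case: ifP; rewrite ?mulr1 ?mulr0.
rewrite by_offset (eq_big_nat _ _ (F2 := fun e => (k%:R - e%:R) * (n%:R - e%:R - 1))).
  by rewrite sum_weighted_descending mulrS; field.
move=> e /andP[_ ek]; rewrite natrB ?(ltnW ek) // natrB; last by lia.
by rewrite -natr1; ring.
Qed.

End BandWeights.

(* mac is a maximum seeded with 0, hence nonnegative. *)
Lemma mac_ge0 (R : realType) (V : finType) (a : rel V) (w : V -> V -> R) :
  0 <= mac a w.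
Proof. by rewrite /mac; elim/big_rec: _ => // X x _ x_ge0; rewrite le_max x_ge0 orbT. Qed.

Lemma c_nu_le_ratio (R : realType) (nu : nat) {V : finType} {a : rel V}
    {w : V -> V -> R} :
  loopless a -> nonneg_weights a w -> acyclic a -> longest_path_vertices a nu ->
  0 < total_weight a w -> c_nu R nu <= mac a w / total_weight a w.
Proof.
move=> loopless_a w_ge0 acyclic_a longest_a total_gt0.
apply: ge_sup => [|c [_ c_ok]].
  by exists 0; split => // V' a' w' *; rewrite mul0r mac_ge0.
by rewrite ler_pdivlMr //; exact: c_ok.
Qed.

Lemma c_nu_band_bound (R : realType) n m : (2 <= m <= n)%N ->
  c_nu R n <= 3 * n%:R * m%:R / (4 * (m%:R - 1) * (3 * n%:R - m%:R - 1)).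
Proof.
move=> /andP[m_gt1 mn]; have n_gt0 : (0 < n)%N by lia.
have m_ge2 : 2 <= m%:R :> R by rewrite (ler_nat R 2 m).
have m_le_n : m%:R <= n%:R :> R by rewrite ler_nat.
have total := @band_total_weight R n m ltac:(lia).
have total_gt0 : 0 < total_weight (band_arc n m) (band_weight R n m).
  by rewrite total !divr_gt0 ?mulr_gt0 //; lra.
have w_ge0 : nonneg_weights (band_arc n m) (band_weight R n m).
  by move=> u v _; exact: ler0n.
have mac_le : mac (band_arc n m) (band_weight R n m) <= n%:R * m%:R ^+ 2 / 8.
  apply: bigmax_le => [|X _]; last exact: band_cut_bound.
  by rewrite divr_ge0 ?mulr_ge0 ?exprn_ge0.
apply: (le_trans (c_nu_le_ratio R n (band_loopless n m) w_ge0 (band_acyclic n m)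
  (band_longest n m n_gt0 m_gt1) total_gt0)).
suff -> : 3 * n%:R * m%:R / (4 * (m%:R - 1) * (3 * n%:R - m%:R - 1)) =
    n%:R * m%:R ^+ 2 / 8 / total_weight (band_arc n m) (band_weight R n m).
  by rewrite ler_wpM2r // invr_ge0 ltW.
rewrite total; field; apply/and3P; split; apply/eqP; lra.
Qed.

(* The numeric estimate for n = s^2 and m = 2q with q <= s < q + 1; its
   core is a cubic polynomial inequality, proved in the variable t = s - q. *)
Lemma band_ratio_le (R : realFieldType) (s q : R) :
  12 <= s ^+ 2 -> 0 <= s -> q <= s -> s < q + 1 ->
  3 * s ^+ 2 * (2 * q) / (4 * (2 * q - 1) * (3 * s ^+ 2 - 2 * q - 1)) <=
  1 / 4 + 1 / (3 * s - 10).
Proof.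
move=> s2_ge12 s_ge0 q_le_s s_lt_q1.
have s_gt : 10 < 3 * s by nra.
have key : 3 * (3 * s - 10) * s ^+ 2 * (2 * q) <=
    (3 * s - 6) * (2 * q - 1) * (3 * s ^+ 2 - 2 * q - 1).
  set t := s - q.
  have -> : q = s - t by rewrite /t; ring.
  have t_ge0 : 0 <= t by rewrite /t; lra.
  have t_le1 : t <= 1 by rewrite /t; lra.
  (* Nonnegative products certifying the inequality for nra. *)
  have h1 : 0 <= s * (1 - t) by apply: mulr_ge0; lra.
  have h2 : 0 <= s * (1 - t ^+ 2) by apply: mulr_ge0; nra.
  have h3 : 0 <= s ^+ 2 * (s - 3) by apply: mulr_ge0; nra.
  nra.
have den_gt0 : 0 < 4 * (2 * q - 1) * (3 * s ^+ 2 - 2 * q - 1).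
  apply: mulr_gt0; first by apply: mulr_gt0; lra.
  have : 0 < (s - 1) * (3 * s + 1) by apply: mulr_gt0; lra.
  lra.
rewrite (_ : 1 / 4 + 1 / (3 * s - 10) = (3 * s - 6) / (4 * (3 * s - 10))); last first.
  by field; apply/eqP; lra.
rewrite ler_pdivrMr // [X in _ <= X]mulrAC ler_pdivlMr; last by lra.
nra.
Qed.

Lemma nat_floor_sqrt n : exists q, (q * q <= n < q.+1 * q.+1)%N.
Proof.
elim: n => [|n [q /andP[lo hi]]]; first by exists 0%N.
by case: (ltnP n.+1 (q.+1 * q.+1)) => h; [exists q | exists q.+1]; nia.
Qed.

Theorem mainTheorem13 (R : realType) (nu : nat) :
  (12 <= nu)%N ->
  c_nu R nu <= 1 / 4 + 1 / (3 * Num.sqrt (nu%:R) - 10).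
Proof.
move=> nu_ge12; have [q /andP[q_lo q_hi]] := nat_floor_sqrt nu.
have band := @c_nu_band_bound R nu (2 * q)%N ltac:(nia).
set s := Num.sqrt (nu%:R : R).
have s_ge0 : 0 <= s by exact: sqrtr_ge0.
have s2 : s ^+ 2 = nu%:R by rewrite sqr_sqrtr ?ler0n.
have q_le_s : q%:R <= s.
  by rewrite -(ler_pXn2r (n := 2)) ?nnegrE ?ler0n // s2 -natrX ler_nat expnS expn1.
have s_lt_q1 : s < q%:R + 1.
  rewrite -(ltr_pXn2r (n := 2)) ?nnegrE ?addr_ge0 ?ler0n // s2 natr1 -natrX ltr_nat.
  by rewrite expnS expn1.
apply: le_trans band _; rewrite -s2 natrM.
by apply: band_ratio_le => //; rewrite s2 (ler_nat R 12 nu).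
Qed.
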